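(* Let $Q$ be a quiver without oriented cycles, $\mathbf D=k\tilde Q/\mathcal I$, $i$ a source of $Q$, and $M$ a $\Delta$-filtered $\mathbf D$-module with $d_i=(\underline{\dim}_\Delta M)_i>0$. Then $M$ has a unique submodule isomorphic to $\Delta(i)^{d_i}$, and the quotient $M/\Delta(i)^{d_i}$ is $\Delta$-filtered.
   Context: $k$ is an algebraically closed field. $\tilde Q$ is the double of $Q$ (arrows $\alpha\in Q_1$ and $\alpha^*:t(\alpha)\to s(\alpha)$), paths composed right to left; $\mathcal I\subseteq k\tilde Q$ is generated by $\alpha^*\alpha-\sum_{\gamma\in Q_1,t(\gamma)=s(\alpha)}\gamma\gamma^*$ ($\alpha\in Q_1$) and $\beta^*\alpha$ ($\alpha\ne\beta\in Q_1$, $t(\alpha)=t(\beta)$). $\Delta(i)$ is the indecomposable projective $kQ$-module with top $L(i)$, a $\mathbf D$-module via $\mathbf D\to kQ$ (killing the $\alpha^*$). $\Delta$-filtered: has a filtration by submodules with successive quotients among the $\Delta(j)$ (equivalently, projective as a $kQ$-module). $\underline{\dim}_\Delta(M)_i$ is the multiplicity of $\Delta(i)$ in such a filtration. A source is a vertex at which no arrow of $Q$ ends. *)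

From HB Require Import structures.
From mathcomp Require Import all_boot all_order all_algebra.
Set Implicit Arguments. Unset Strict Implicit. Unset Printing Implicit Defensive.
Import GRing.Theory.
Local Open Scope ring_scope.

Record quiver := Quiver {
  Q0 : finType; Q1 : finType; qsrc : Q1 -> Q0; qtgt : Q1 -> Q0 }.

Section Quivers.
Variable Q : quiver.

Fixpoint qpath (x : Q0 Q) (p : seq (Q1 Q)) (y : Q0 Q) : bool :=
  if p is a :: p' then (qsrc a == x) && qpath (qtgt a) p' y else x == y.

Definition acyclic : Prop := forall x p, qpath x p x -> p = [::].

Definition is_source (i : Q0 Q) : bool := [forall a, qtgt a != i].

Definition short_seqs (N : nat) : seq (seq (Q1 Q)) :=
  flatten [seq [seq tval w | w <- enum {: l.-tuple (Q1 Q)}] | l <- iota 0 N].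

(* The paths from i to x (for an acyclic quiver every path has length
   < #|Q0|, so this is the list of all of them, without repetition). *)
Definition paths_from_to (i x : Q0 Q) : seq (seq (Q1 Q)) :=
  [seq p <- short_seqs #|Q0 Q| | qpath i p x].

Variable K : fieldType.

(* Finite-dimensional representations of the double quiver tilde Q:
   V_x = K^(rdim x) (row vectors), arrow a : s a -> t a acts by rmor a,
   a^star : t a -> s a acts by rstar a (maps act on the right of row vectors). *)
Record rep := Rep {
  rdim : Q0 Q -> nat;
  rmor : forall a : Q1 Q, 'M[K]_(rdim (qsrc a), rdim (qtgt a));
  rstar : forall a : Q1 Q, 'M[K]_(rdim (qtgt a), rdim (qsrc a)) }.

Definition castsq (M : rep) (x y : Q0 Q) (e : x = y) :
  'M[K]_(rdim M x) -> 'M[K]_(rdim M y) :=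
  castmx (congr1 (rdim M) e, congr1 (rdim M) e).

(* The term gamma gamma^star viewed at vertex y (zero if t gamma <> y). *)
Definition gg_at (M : rep) (y : Q0 Q) (g : Q1 Q) : 'M[K]_(rdim M y) :=
  if qtgt g =P y is ReflectT e then castsq e (rstar M g *m rmor M g) else 0.

(* beta^star alpha (first alpha then beta^star), zero if t alpha <> t beta. *)
Definition star_after (M : rep) (a b : Q1 Q) :
  'M[K]_(rdim M (qsrc a), rdim M (qsrc b)) :=
  if qtgt b =P qtgt a is ReflectT e
  then rmor M a *m castmx (congr1 (rdim M) e, erefl) (rstar M b) else 0.

Definition is_Dmod (M : rep) : Prop :=
  (forall a, rmor M a *m rstar M a = \sum_(g | qtgt g == qsrc a) gg_at M (qsrc a) g)
  /\ (forall a b, a != b -> qtgt a = qtgt b -> star_after M a b = 0).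

Definition is_hom (M N : rep) (f : forall x, 'M[K]_(rdim M x, rdim N x)) : Prop :=
  (forall a, rmor M a *m f (qtgt a) = f (qsrc a) *m rmor N a) /\
  (forall a, rstar M a *m f (qsrc a) = f (qtgt a) *m rstar N a).

Record qhom (M N : rep) := QHom {
  hmap :> forall x, 'M[K]_(rdim M x, rdim N x);
  hmapP : is_hom hmap }.

Definition hinj (M N : rep) (f : qhom M N) : Prop := forall x, row_free (f x).
Definition hsurj (M N : rep) (f : qhom M N) : Prop := forall x, row_full (f x).

(* The standard module Delta(i): the projective kQ-module kQ e_i, with basis
   at x the paths from i to x; arrow a sends path p to p followed by a;
   all a^star act by zero. *)
Definition Delta (i : Q0 Q) : rep :=
  @Rep (fun x => size (paths_from_to i x))
    (fun a => \matrix_(u, v)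
        ((nth [::] (paths_from_to i (qtgt a)) v
          == rcons (nth [::] (paths_from_to i (qsrc a)) u) a)%:R))
    (fun a => 0).

Definition zero_rep : rep := @Rep (fun _ => 0%N) (fun _ => 0) (fun _ => 0).

Definition dsum (M N : rep) : rep :=
  @Rep (fun x => (rdim M x + rdim N x)%N)
    (fun a => block_mx (rmor M a) 0 0 (rmor N a))
    (fun a => block_mx (rstar M a) 0 0 (rstar N a)).

Fixpoint rpow (M : rep) (d : nat) : rep :=
  if d is d'.+1 then dsum M (rpow M d') else zero_rep.

(* Delta-filtrations: dfilt M js holds iff M has a filtration
   0 = M_0 < M_1 < ... < M_r = M with M_l / M_(l-1) ~ Delta(js_l).
   (M_(r-1) is the image of an injective f : N -> M, M / M_(r-1) ~ Delta j
   is witnessed by a surjection p : M -> Delta j with kernel im f.) *)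
Inductive dfilt : rep -> seq (Q0 Q) -> Prop :=
| dfilt0 (M : rep) : (forall x, rdim M x = 0%N) -> dfilt M [::]
| dfiltS (M N : rep) (js : seq (Q0 Q)) (j : Q0 Q)
    (f : qhom N M) (p : qhom M (Delta j)) :
    hinj f -> hsurj p -> (forall x, (kermx (p x) == f x)%MS) ->
    dfilt N js -> dfilt M (rcons js j).

Definition Delta_filtered (M : rep) : Prop := exists js, dfilt M js.

End Quivers.

From HB Require Import structures.
From mathcomp Require Import all_boot all_order all_algebra.
Set Implicit Arguments. Unset Strict Implicit. Unset Printing Implicit Defensive.
Import GRing.Theory.

(* Two facts about Delta drive everything:
   (a) Yoneda: since i is a source, the preprojective relations force every
       a^star to vanish on the paths issued from a vector m of M_i, so
       transporting m along the paths from i defines a homomorphism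
       Delta -> M with value m at i; and every homomorphism out of a power
       of Delta is determined by its component at i (Delta(i)_i = k).
   (b) Consequently every surjection M -> Delta of D-modules splits.
   We then prove, by induction on a Delta-filtration js of M, that M
   contains a copy of Delta^d, d = count_mem i js, whose quotient has a
   Delta-filtration by the remaining factors: a layer Delta(i) splits off
   by (b), a layer Delta(j), j <> i, stays on top of the new quotient (a
   third isomorphism argument).  The quotient is zero at i, which by (a)
   forces every embedding of Delta^d into M to land in the chosen copy;
   equality of ranks gives uniqueness.  No use is made of algebraic
   closedness: the development works over an arbitrary field. *)

Section Paths.
Variable Q : quiver.

Lemma qpath_rcons (x y : Q0 Q) p a :
  qpath x (rcons p a) y = qpath x p (qsrc a) && (qtgt a == y).
Proof.
elim: p x => [|b p IH] x /=; last by rewrite IH andbA.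
by rewrite eq_sym; case: (_ == _); rewrite ?andbF ?andbT.
Qed.

Lemma path_reach (x y z : Q0 Q) p : qpath x p y -> z \in map (@qtgt Q) p ->
  exists2 p1, p1 != [::] & qpath x p1 z.
Proof.
elim: p x => [|a p IH] x //= /andP [/eqP ex hp].
rewrite inE => /orP [/eqP -> | zp]; first by exists [:: a] => //=; rewrite ex !eqxx.
by case: (IH _ hp zp) => p1 _ h1; exists (a :: p1) => //=; rewrite ex eqxx.
Qed.

Lemma path_uniq (x y : Q0 Q) p : acyclic Q -> qpath x p y ->
  uniq (x :: map (@qtgt Q) p).
Proof.
move=> ac; elim: p x => [|a p IH] x // /andP [/eqP ex hp].
rewrite map_cons cons_uniq (IH _ hp) andbT -ex; apply/negP => hin.
have hp' : qpath (qsrc a) (a :: p) y by rewrite /= eqxx.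
by case: (path_reach hp' hin) => p1 n1 /ac e1; rewrite e1 in n1.
Qed.

Lemma path_size (x y : Q0 Q) p : acyclic Q -> qpath x p y -> (size p < #|Q0 Q|)%N.
Proof.
move=> ac /(path_uniq ac) u.
by move: (card_uniqP u) (max_card (mem (x :: map (@qtgt Q) p))) => /= -> ; rewrite size_map.
Qed.

Lemma mem_short N (p : seq (Q1 Q)) : (p \in short_seqs Q N) = (size p < N)%N.
Proof.
apply/idP/idP.
  case/flatten_mapP => l; rewrite mem_iota add0n => /andP [_ lN].
  by case/mapP => w _ ->; rewrite size_tuple.
move=> pN; apply/flatten_mapP; exists (size p); first by rewrite mem_iota.
by apply/mapP; exists (in_tuple p); rewrite ?mem_enum.
Qed.

Lemma uniq_short N : uniq (short_seqs Q N).
Proof.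
elim: N => [//|N IH].
rewrite /short_seqs -addn1 iotaD map_cat flatten_cat cat_uniq.
rewrite -/(short_seqs Q N) IH /= cats0 map_inj_uniq ?enum_uniq ?andbT; last exact: val_inj.
by apply/hasPn => p /mapP [w _ ->]; rewrite mem_short size_tuple add0n ltnn.
Qed.

Lemma uniq_paths (i x : Q0 Q) : uniq (paths_from_to i x).
Proof. by rewrite filter_uniq // uniq_short. Qed.

Lemma mem_paths (i x : Q0 Q) p : acyclic Q ->
  (p \in paths_from_to i x) = qpath i p x.
Proof.
move=> ac; rewrite mem_filter mem_short.
by apply/andP/idP => [[] // | h]; split => //; apply: path_size h.
Qed.

Lemma paths_self (i : Q0 Q) : acyclic Q -> paths_from_to i i = [:: [::]].
Proof.
move=> ac.
have hall : all (pred1 [::]) (paths_from_to i i).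
  by apply/allP => p; rewrite mem_paths // => /ac ->.
have hin : [::] \in paths_from_to i i by rewrite mem_paths //=.
move: hall hin (uniq_paths i i); case: (paths_from_to i i) => [//|p [|q s]] /=.
  by case/andP => /eqP ->.
by case/and3P => /eqP -> /eqP -> _; rewrite inE eqxx.
Qed.

Lemma paths_to_source (i j : Q0 Q) : is_source i -> j != i ->
  paths_from_to j i = [::].
Proof.
move=> si ji.
have noP p : qpath j p i = false.
  apply/negP; case/lastP: p => [/= /eqP e|p a]; first by rewrite e eqxx in ji.
  by rewrite qpath_rcons => /andP [_ /eqP ta]; move/forallP: si => /(_ a); rewrite ta eqxx.
by rewrite /paths_from_to; elim: (short_seqs _ _) => //= p s ->; rewrite noP.
Qed.
End Paths.

Local Open Scope ring_scope.

Section MatrixFacts.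
Variable K : fieldType.

Lemma full_factor m n p (P : 'M[K]_(m, n)) (G : 'M[K]_(m, p)) :
  row_full P -> (kermx P <= kermx G)%MS -> P *m (pinvmx P *m G) = G.
Proof.
move=> fP sk.
have h0 : (1%:M - P *m pinvmx P) *m P = 0.
  by rewrite mulmxBl mul1mx -mulmxA mulVpmx // mulmx1 subrr.
have /sub_kermxP : ((1%:M - P *m pinvmx P) <= kermx G)%MS.
  by apply: submx_trans sk; apply/sub_kermxP.
by rewrite mulmxBl mul1mx mulmxA => /eqP; rewrite subr_eq0 => /eqP.
Qed.

Lemma free_mul m n p (A : 'M[K]_(m, n)) (B : 'M_(n, p)) :
  row_free A -> row_free B -> row_free (A *m B).
Proof.
move=> fA fB; apply: inj_row_free => v.
by rewrite mulmxA => /eqP; rewrite !mulmx_free_eq0 // => /eqP.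
Qed.

Lemma full_mul m n p (A : 'M[K]_(m, n)) (B : 'M_(n, p)) :
  row_full A -> row_full B -> row_full (A *m B).
Proof.
move=> /row_fullP [A' hA] /row_fullP [B' hB]; apply/row_fullP.
by exists (B' *m A'); rewrite mulmxA -(mulmxA B') hA mulmx1 hB.
Qed.

Lemma rinv_full m n (A : 'M[K]_(m, n)) (B : 'M_(n, m)) :
  B *m A = 1%:M -> row_full A.
Proof. by move=> hBA; apply/row_fullP; exists B. Qed.

Lemma ker_eq_mul0 k m n (A : 'M[K]_(k, m)) (P : 'M_(m, n)) :
  (kermx P == A)%MS -> A *m P = 0.
Proof. by case/andP=> _ /sub_kermxP. Qed.
End MatrixFacts.

Section Homs.
Variables (Q : quiver) (K : fieldType).
Local Notation rep := (rep Q K).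

Definition hcomp (M N P : rep) (f : qhom M N) (g : qhom N P) : qhom M P.
refine (@QHom _ _ M P (fun x => f x *m g x) _).
case: (hmapP f) => f1 f2; case: (hmapP g) => g1 g2; split => a.
- by rewrite mulmxA f1 -mulmxA g1 mulmxA.
- by rewrite mulmxA f2 -mulmxA g2 mulmxA.
Defined.

Definition hid (M : rep) : qhom M M.
refine (@QHom _ _ M M (fun x => 1%:M) _).
by split => a; rewrite mulmx1 mul1mx.
Defined.

Definition hsub (M N : rep) (f g : qhom M N) : qhom M N.
refine (@QHom _ _ M N (fun x => f x - g x) _).
case: (hmapP f) => f1 f2; case: (hmapP g) => g1 g2.
by split => a; rewrite mulmxBr mulmxBl ?f1 ?g1 ?f2 ?g2.
Defined.

Definition hjoin (A B M : rep) (h1 : qhom A M) (h2 : qhom B M) : qhom (dsum A B) M.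
refine (@QHom _ _ (dsum A B) M (fun x => col_mx (h1 x) (h2 x)) _).
case: (hmapP h1) => a1 a2; case: (hmapP h2) => b1 b2.
split => a /=; rewrite mul_block_col mul_col_mx !mul0mx addr0 add0r.
  by rewrite a1 b1.
by rewrite a2 b2.
Defined.

Lemma dsum_split (A B M : rep) (h : qhom (dsum A B) M) :
  exists (h1 : qhom A M) (h2 : qhom B M), forall x, h x = col_mx (h1 x) (h2 x).
Proof.
case: (hmapP h) => f1 f2.
have E1 a : rmor A a *m usubmx (h (qtgt a)) = usubmx (h (qsrc a)) *m rmor M a /\
            rmor B a *m dsubmx (h (qtgt a)) = dsubmx (h (qsrc a)) *m rmor M a.
  have := f1 a; rewrite /= -[h (qtgt a)]vsubmxK -[h (qsrc a)]vsubmxK.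
  rewrite mul_block_col mul_col_mx !mul0mx addr0 add0r => /eq_col_mx [e1 e2].
  by rewrite !col_mxKu !col_mxKd.
have E2 a : rstar A a *m usubmx (h (qsrc a)) = usubmx (h (qtgt a)) *m rstar M a /\
            rstar B a *m dsubmx (h (qsrc a)) = dsubmx (h (qtgt a)) *m rstar M a.
  have := f2 a; rewrite /= -[h (qtgt a)]vsubmxK -[h (qsrc a)]vsubmxK.
  rewrite mul_block_col mul_col_mx !mul0mx addr0 add0r => /eq_col_mx [e1 e2].
  by rewrite !col_mxKu !col_mxKd.
have hu : @is_hom Q K A M (fun x => usubmx (h x)).
  by split => a; [case: (E1 a) | case: (E2 a)].
have hd : @is_hom Q K B M (fun x => dsubmx (h x)).
  by split => a; [case: (E1 a) | case: (E2 a)].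
by exists (QHom hu), (QHom hd) => x /=; rewrite vsubmxK.
Qed.

Lemma factor_surj (M X Y : rep) (p : qhom M X) (g : qhom M Y) :
  hsurj p -> (forall x, kermx (p x) <= kermx (g x))%MS ->
  exists h : qhom X Y, forall x, p x *m h x = g x.
Proof.
move=> sp sk.
have E x : p x *m (pinvmx (p x) *m g x) = g x by apply: full_factor.
have hh : is_hom (fun x => pinvmx (p x) *m g x).
  case: (hmapP p) => p1 p2; case: (hmapP g) => g1 g2; split => a.
  - apply: (row_full_inj (sp (qsrc a))).
    by rewrite mulmxA -p1 -mulmxA E g1 [RHS]mulmxA E.
  - apply: (@row_full_inj _ _ _ _ (p (qtgt a)) (sp _)).
    by rewrite mulmxA -p2 -mulmxA E g2 [RHS]mulmxA E.
by exists (QHom hh).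
Qed.

Lemma lift_inj (N M Y : rep) (f : qhom N M) (g : qhom Y M) :
  hinj f -> (forall x, g x <= f x)%MS ->
  exists h : qhom Y N, forall x, h x *m f x = g x.
Proof.
move=> jf sg.
have E x : g x *m pinvmx (f x) *m f x = g x by apply: mulmxKpV.
have hh : is_hom (fun x => g x *m pinvmx (f x)).
  case: (hmapP f) => f1 f2; case: (hmapP g) => g1 g2; split => a.
  - apply: (row_free_inj (jf (qtgt a))).
    by rewrite -[LHS]mulmxA E g1 -[RHS]mulmxA f1 mulmxA E.
  - apply: (@row_free_inj _ _ _ _ (f (qsrc a)) (jf _)).
    by rewrite -[LHS]mulmxA E g2 -[RHS]mulmxA f2 mulmxA E.
by exists (QHom hh).
Qed.

Lemma image_stable (A M : rep) (F : qhom A M) :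
  (forall a, F (qsrc a) *m rmor M a <= F (qtgt a))%MS /\
  (forall a, F (qtgt a) *m rstar M a <= F (qsrc a))%MS.
Proof.
case: (hmapP F) => F1 F2; split => a; [rewrite -F1 | rewrite -F2]; exact: submxMl.
Qed.

Lemma quotient_rep (M : rep) (k : Q0 Q -> nat) (S : forall x, 'M[K]_(k x, rdim M x)) :
  (forall a, S (qsrc a) *m rmor M a <= S (qtgt a))%MS ->
  (forall a, S (qtgt a) *m rstar M a <= S (qsrc a))%MS ->
  exists X (p : qhom M X), hsurj p /\ forall x, (kermx (p x) == S x)%MS.
Proof.
move=> S1 S2.
pose P x := col_base (cokermx (S x)).
have kP x : (kermx (P x) == S x)%MS.
  apply/andP; split.
    rewrite submxE; apply/eqP.
    transitivity (kermx (P x) *m P x *m row_base (cokermx (S x))).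
      by rewrite -mulmxA mulmx_base.
    by rewrite mulmx_ker mul0mx.
  apply/sub_kermxP; apply/eqP.
  rewrite -(mulmx_free_eq0 _ (row_base_free (cokermx (S x)))).
  by rewrite -mulmxA mulmx_base mulmx_coker.
have kin x y (B : 'M_(rdim M x, rdim M y)) :
    (S x *m B <= S y)%MS -> (kermx (P x) <= kermx (B *m P y))%MS.
  move=> sB; apply/sub_kermxP; rewrite mulmxA; apply/sub_kermxP.
  apply: submx_trans (submxMr _ (proj1 (andP (kP x)))) _.
  by apply: submx_trans sB (proj2 (andP (kP y))).
pose X := @Rep Q K (fun x => \rank (cokermx (S x)))
   (fun a => pinvmx (P (qsrc a)) *m (rmor M a *m P (qtgt a)))
   (fun a => pinvmx (P (qtgt a)) *m (rstar M a *m P (qsrc a))).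
have hp : @is_hom Q K M X P.
  split => a /=; rewrite full_factor ?col_base_full //; apply: kin; [exact: S1 | exact: S2].
by exists X, (QHom hp); split => // x; exact: col_base_full.
Qed.

Lemma cast_hom (N M : rep) (f : forall x, 'M[K]_(rdim N x, rdim M x))
   x z (e : x = z) n n' (A : 'M_(rdim N x, n)) (B : 'M_(rdim M x, n')) (F : 'M_(n, n')) :
  A *m F = f x *m B ->
  castmx (congr1 (rdim N) e, erefl) A *m F = f z *m castmx (congr1 (rdim M) e, erefl) B.
Proof. by case: z / e; rewrite !castmx_id. Qed.

Lemma Dmod_sub (N M : rep) (f : qhom N M) : hinj f -> is_Dmod M -> is_Dmod N.
Proof.
move=> jf [D1 D2]; case: (hmapP f) => f1 f2.
have gg y g : gg_at N y g *m f y = f y *m gg_at M y g.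
  rewrite /gg_at; case: (qtgt g =P y) => [e|_]; last by rewrite mul0mx mulmx0.
  case: y / e; rewrite /castsq !castmx_id.
  by rewrite -mulmxA f1 mulmxA f2 mulmxA.
split.
- move=> a; apply: (@row_free_inj _ _ _ _ (f (qsrc a)) (jf _)) => /=.
  rewrite -mulmxA f2 mulmxA f1 -mulmxA D1 mulmx_suml mulmx_sumr.
  by apply: eq_bigr => g _; rewrite gg.
- move=> a b ab eab; apply: (@row_free_inj _ _ _ _ (f (qsrc b)) (jf _)) => /=.
  have -> : star_after N a b *m f (qsrc b) = f (qsrc a) *m star_after M a b.
    rewrite /star_after; case: (qtgt b =P qtgt a) => [e|_]; last first.
      by rewrite mul0mx mulmx0.
    by rewrite -mulmxA (@cast_hom N M f _ _ e _ _ _ _ _ (f2 b)) mulmxA f1 -mulmxA.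
  by rewrite D2 // mulmx0 mul0mx.
Qed.
End Homs.

Section Extensions.
Variables (Q : quiver) (K : fieldType).
Local Notation rep := (rep Q K).

Lemma split_retraction (N M Y : rep) (f0 : qhom N M) (p0 : qhom M Y) (s : qhom Y M) :
  hinj f0 -> (forall x, kermx (p0 x) == f0 x)%MS -> (forall x, s x *m p0 x = 1%:M) ->
  exists r : qhom M N, forall x,
    [/\ f0 x *m r x = 1%:M, s x *m r x = 0 & p0 x *m s x + r x *m f0 x = 1%:M].
Proof.
move=> jf0 k0 sp.
have f0p0 x : f0 x *m p0 x = 0 by apply: ker_eq_mul0.
pose g := hsub (hid M) (hcomp p0 s).
have gf0 x : (g x <= f0 x)%MS.
  apply: submx_trans (proj1 (andP (k0 x))).
  by apply/sub_kermxP; rewrite /= mulmxBl mul1mx -mulmxA sp mulmx1 subrr.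
case: (lift_inj jf0 gf0) => r hr; exists r => x; split.
- apply: (row_free_inj (jf0 x)); rewrite -mulmxA hr /= mulmxBr mulmx1 mulmxA f0p0.
  by rewrite mul0mx subr0 mul1mx.
- apply: (row_free_inj (jf0 x)); rewrite -mulmxA hr /= mulmxBr mulmx1 mulmxA sp.
  by rewrite mul1mx subrr mul0mx.
- by rewrite hr /= addrC subrK.
Qed.

Lemma third_iso (A N M Y XN X : rep) (fN : qhom A N) (pN : qhom N XN)
    (f0 : qhom N M) (p0 : qhom M Y) (p : qhom M X) :
  hinj f0 -> hsurj p0 -> (forall x, kermx (p0 x) == f0 x)%MS ->
  hsurj pN -> (forall x, kermx (pN x) == fN x)%MS ->
  hsurj p -> (forall x, kermx (p x) == fN x *m f0 x)%MS ->
  exists (h : qhom XN X) (q : qhom X Y),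
    [/\ hinj h, hsurj q & forall x, (kermx (q x) == h x)%MS].
Proof.
move=> jf0 sp0 k0 spN kN sp kp.
have fNpN x : fN x *m pN x = 0 by apply: ker_eq_mul0.
have f0p0 x : f0 x *m p0 x = 0 by apply: ker_eq_mul0.
have kNp x : (kermx (pN x) <= kermx (hcomp f0 p x))%MS.
  apply: submx_trans (proj1 (andP (kN x))) _; apply/sub_kermxP.
  by rewrite mulmxA; apply: ker_eq_mul0.
case: (factor_surj spN kNp) => h eh.
have kpp0 x : (kermx (p x) <= kermx (p0 x))%MS.
  apply: submx_trans (proj1 (andP (kp x))) _; apply: submx_trans (submxMl _ _) _.
  by case/andP: (k0 x).
case: (factor_surj sp kpp0) => q eq.
exists h, q; split.
- move=> x; apply: inj_row_free => v hv.
  have ev : v = v *m pinvmx (pN x) *m pN x by rewrite -mulmxA mulVpmx // mulmx1.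
  have /submxP [W eW] : (v *m pinvmx (pN x) *m f0 x <= fN x *m f0 x)%MS.
    apply: submx_trans (proj1 (andP (kp x))); apply/sub_kermxP.
    by rewrite -mulmxA -[_ *m p x]eh /= mulmxA -ev hv.
  have e2 : v *m pinvmx (pN x) = W *m fN x.
    by apply: (row_free_inj (jf0 x)); rewrite eW mulmxA.
  by rewrite ev e2 -mulmxA fNpN mulmx0.
- move=> x; case/row_fullP: (sp0 x) => C hC; apply/row_fullP.
  by exists (C *m p x); rewrite -mulmxA eq.
- move=> x; apply/andP; split; last first.
    apply/sub_kermxP; apply: (row_full_inj (spN x)).
    by rewrite mulmxA eh /= -mulmxA eq f0p0 mulmx0.
  set Kq := kermx _.
  have eK : Kq = Kq *m pinvmx (p x) *m p x by rewrite -mulmxA mulVpmx // mulmx1.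
  have /submxP [W eW] : (Kq *m pinvmx (p x) <= f0 x)%MS.
    apply: submx_trans (proj1 (andP (k0 x))); apply/sub_kermxP.
    by rewrite -eq mulmxA -eK /Kq mulmx_ker.
  by rewrite eK eW -mulmxA -[_ *m p x]eh /= mulmxA submxMl.
Qed.
End Extensions.

Section Transport.
Variables (Q : quiver) (K : fieldType).
Local Notation rep := (rep Q K).

Definition castv (M : rep) (y z : Q0 Q) (e : y = z) (v : 'rV[K]_(rdim M y)) :
  'rV_(rdim M z) := castmx (erefl, congr1 (rdim M) e) v.

Fixpoint tr (M : rep) (y : Q0 Q) (v : 'rV[K]_(rdim M y)) (p : seq (Q1 Q)) (z : Q0 Q)
  {struct p} : 'rV[K]_(rdim M z) :=
  match p with
  | [::] => if y =P z is ReflectT e then castv e v else 0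
  | a :: p' => if y =P qsrc a is ReflectT e then tr (castv e v *m rmor M a) p' z else 0
  end.

Lemma tr_nil (M : rep) y (v : 'rV_(rdim M y)) : tr v [::] y = v.
Proof.
rewrite /=; case: (y =P y) => [e|//].
by rewrite (eq_irrelevance e erefl) /castv castmx_id.
Qed.

Lemma tr_cons (M : rep) a (v : 'rV_(rdim M (qsrc a))) p z :
  tr v (a :: p) z = tr (v *m rmor M a) p z.
Proof.
rewrite /=; case: (qsrc a =P qsrc a) => [e|//].
by rewrite (eq_irrelevance e erefl) /castv castmx_id.
Qed.

Lemma tr_rcons (M : rep) y (v : 'rV_(rdim M y)) p a :
  qpath y p (qsrc a) -> tr v (rcons p a) (qtgt a) = tr v p (qsrc a) *m rmor M a.
Proof.
elim: p y v => [|b p IH] y v.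
  by move/eqP => e; subst y; change (rcons [::] a) with [:: a]; rewrite tr_cons !tr_nil.
by case/andP => /eqP e hp; subst y; rewrite rcons_cons !tr_cons IH.
Qed.

Lemma tr0 (M : rep) y p z : tr (0 : 'rV_(rdim M y)) p z = 0.
Proof.
elim: p y => [|b p IH] y /=.
  by case: (y =P z) => [e|//]; subst z; rewrite /castv castmx_id.
by case: (y =P qsrc b) => [e|//]; subst y; rewrite /castv castmx_id mul0mx IH.
Qed.

Lemma tr_hom (M N : rep) (f : qhom M N) y (v : 'rV_(rdim M y)) p z :
  tr v p z *m f z = tr (v *m f y) p z.
Proof.
case: (hmapP f) => f1 _.
elim: p y v => [|b p IH] y v /=.
  case: (y =P z) => [e|_]; last by rewrite mul0mx.
  by subst z; rewrite /castv !castmx_id.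
case: (y =P qsrc b) => [e|_]; last by rewrite mul0mx.
by subst y; rewrite /castv !castmx_id IH -mulmxA f1 mulmxA.
Qed.

Lemma castsq_mul (M : rep) x z (e : x = z) n (A : 'M[K]_(rdim M x, n)) (B : 'M_(n, rdim M x)) :
  castsq e (A *m B) =
  castmx (congr1 (rdim M) e, erefl) A *m castmx (erefl, congr1 (rdim M) e) B.
Proof. by case: z / e; rewrite /castsq !castmx_id. Qed.

(* By induction on
   the path: for its last arrow a, a a^star = sum of gamma gamma^star at
   s a (killed by induction), and b^star a = 0 for b <> a. *)
Lemma tr_star (M : rep) (i : Q0 Q) (m : 'rV_(rdim M i)) :
  is_Dmod M -> is_source i -> forall p z, qpath i p z ->
  forall b (e : qtgt b = z),
  tr m p z *m castmx (congr1 (rdim M) e, erefl) (rstar M b) = 0.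
Proof.
move=> [D1 D2] si; elim/last_ind => [|p a IH] z.
  move=> /= /eqP ei b e; exfalso.
  by move/forallP: si => /(_ b); rewrite e -ei eqxx.
rewrite qpath_rcons => /andP [hp /eqP ez] b e; subst z.
rewrite tr_rcons // -mulmxA.
case: (eqVneq a b) => [ab|nab].
  subst b; rewrite (eq_irrelevance e erefl) castmx_id D1 mulmx_sumr big1 // => g _.
  rewrite /gg_at; case: (qtgt g =P qsrc a) => [e2|_]; last by rewrite mulmx0.
  by rewrite castsq_mul mulmxA IH // mul0mx.
have -> : rmor M a *m castmx (congr1 (rdim M) e, erefl) (rstar M b) = star_after M a b.
  rewrite /star_after; case: (qtgt b =P qtgt a) => [e'|]; last by move=> /(_ e).
  by rewrite (eq_irrelevance e' e).
by rewrite D2 ?mulmx0 // e.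
Qed.
End Transport.

Section DeltaModule.
Variables (Q : quiver) (K : fieldType) (i : Q0 Q).
Hypothesis ac : acyclic Q.
Local Notation rep := (rep Q K).
Local Notation P x := (paths_from_to i x).
Local Notation D := (Delta K i).

Lemma nth_path x (u : 'I_(size (P x))) : qpath i (nth [::] (P x) u) x.
Proof. by rewrite -mem_paths // mem_nth. Qed.

Lemma Delta_row a (u : 'I_(size (P (qsrc a)))) (w : 'I_(size (P (qtgt a)))) :
  nth [::] (P (qtgt a)) w = rcons (nth [::] (P (qsrc a)) u) a ->
  row u (rmor D a) = delta_mx 0 w.
Proof.
by move=> E; apply/rowP => v; rewrite !mxE /= -E nth_uniq ?uniq_paths.
Qed.

Lemma rcons_ord a (u : 'I_(size (P (qsrc a)))) :
  exists w : 'I_(size (P (qtgt a))),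
    nth [::] (P (qtgt a)) w = rcons (nth [::] (P (qsrc a)) u) a.
Proof.
have hin : rcons (nth [::] (P (qsrc a)) u) a \in P (qtgt a).
  by rewrite mem_paths // qpath_rcons nth_path eqxx.
by exists (Ordinal (etrans (index_mem _ _) hin)); rewrite /= nth_index.
Qed.

Lemma size_Pi : size (P i) = 1%N.
Proof. by rewrite paths_self. Qed.

Lemma ord_Pi (u v : 'I_(size (P i))) : u = v.
Proof.
apply: val_inj; have := ltn_ord u; have := ltn_ord v.
by case: u v => [u hu] [v hv] /=; rewrite size_Pi; case: u {hu}; case: v {hv}.
Qed.

Definition smap (M : rep) (m : 'rV_(rdim M i)) x : 'M_(size (P x), rdim M x) :=
  \matrix_(u < size (P x)) tr m (nth [::] (P x) u) x.

Lemma smap_hom (M : rep) (m : 'rV_(rdim M i)) :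
  is_Dmod M -> is_source i -> @is_hom Q K D M (smap m).
Proof.
move=> DM si; split => a; apply/row_matrixP => u.
  rewrite !row_mul; case: (rcons_ord u) => w ew.
  by rewrite (Delta_row ew) -rowE !rowK ew tr_rcons // nth_path.
rewrite /= mul0mx row0 row_mul rowK.
by have := tr_star m DM si (nth_path u) (erefl (qtgt a)); rewrite castmx_id.
Qed.

Lemma smap_row (M : rep) (m : 'rV_(rdim M i)) (u : 'I_(size (P i))) :
  row u (smap m i) = m.
Proof.
rewrite rowK.
have : nth [::] (P i) u \in [:: [::]] by rewrite -(paths_self i ac) mem_nth.
by rewrite inE => /eqP ->; rewrite tr_nil.
Qed.

Lemma Delta_basis (u0 : 'I_(size (P i))) p : forall x (u : 'I_(size (P x))),
  nth [::] (P x) u = p -> delta_mx 0 u = tr (M := D) (delta_mx 0 u0) p x.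
Proof.
elim/last_ind: p => [|p a IH] x u E.
  have := nth_path u; rewrite E => /eqP e; subst x.
  by rewrite tr_nil (ord_Pi u u0).
have := nth_path u; rewrite E qpath_rcons => /andP [hp /eqP e]; subst x.
have hin : p \in P (qsrc a) by rewrite mem_paths.
pose u' : 'I_(size (P (qsrc a))) := Ordinal (etrans (index_mem _ _) hin).
have eu' : nth [::] (P (qsrc a)) u' = p by rewrite /= nth_index.
by rewrite tr_rcons // -(IH _ u' eu') -rowE (@Delta_row a u' u) // eu'.
Qed.

Lemma hom_det (N : rep) (g : qhom D N) (u0 : 'I_(size (P i))) x (u : 'I_(size (P x))) :
  row u (g x) = tr (row u0 (g i)) (nth [::] (P x) u) x.
Proof. by rewrite rowE (@Delta_basis u0 _ x u erefl) (tr_hom g) -rowE. Qed.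

Lemma Delta_det (N : rep) (g : qhom D N) : g i = 0 -> forall x, g x = 0.
Proof.
move=> gi x; have u0 : 'I_(size (P i)) by rewrite size_Pi; exact: ord0.
by apply/row_matrixP => u; rewrite (hom_det g u0) gi !row0 tr0.
Qed.

Lemma rpow_det (N : rep) d (g : qhom (rpow D d) N) :
  g i = 0 -> forall x, g x = 0.
Proof.
elim: d g => [|d IH] g gi x; first exact: flatmx0.
case: (dsum_split g) => h1 [h2 eh].
move: gi; rewrite eh -col_mx0 => /eq_col_mx [e1 e2].
by rewrite eh (IH h2 e2) (Delta_det e1) col_mx0.
Qed.

(* Every surjection of a D-module onto Delta(i), i a source, has a section:
   lift the generator at i and extend by smap. *)
Lemma Delta_section (M : rep) (p0 : qhom M D) :
  is_Dmod M -> is_source i -> hsurj p0 ->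
  exists s : qhom D M, forall x, s x *m p0 x = 1%:M.
Proof.
move=> DM si sp0; case/row_fullP: (sp0 i) => B hB.
have u0 : 'I_(size (P i)) by rewrite size_Pi; exact: ord0.
pose s := QHom (smap_hom (row u0 B) DM si).
have spi : s i *m p0 i = 1%:M.
  apply/row_matrixP => u; rewrite row_mul /= smap_row -row_mul hB.
  by rewrite (ord_Pi u u0).
exists s => x.
have h0 : hsub (hcomp s p0) (hid _) i = 0 by rewrite /= spi subrr.
by have /eqP := Delta_det h0 x; rewrite subr_eq0 => /eqP.
Qed.
End DeltaModule.

Section Main.
Variables (Q : quiver) (K : fieldType) (i : Q0 Q).
Local Notation rep := (rep Q K).
Local Notation D := (Delta K i).

Definition splits_Delta (M : rep) (d : nat) (js : seq (Q0 Q)) : Prop :=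
  exists f : qhom (rpow D d) M, hinj f /\
  exists X (p : qhom M X),
    [/\ hsurj p, forall x, (kermx (p x) == f x)%MS & dfilt X js].

Lemma splits_Delta0 (M : rep) js : dfilt M js -> splits_Delta M 0 js.
Proof.
move=> HM.
have hz : @is_hom Q K (rpow D 0) M (fun x => 0).
  by split => a; rewrite mulmx0 mul0mx.
exists (QHom hz); split; first by move=> x; rewrite /row_free /= mxrank0.
exists M, (hid M); split => // [x | x]; first by rewrite /= -sub1mx submx_refl.
have /eqP -> : kermx (1%:M : 'M[K]_(rdim M x)) == 0.
  by rewrite kermx_eq0 row_free_unit unitmx1.
by apply/andP; rewrite !sub0mx.
Qed.

(* A top layer Delta(i) splits off by Delta_section and is added to the
   copy of Delta(i)^d found in N; the quotient of M is that of N. *)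
Lemma splits_Delta_source (N M : rep) d js (f0 : qhom N M) (p0 : qhom M D) :
  acyclic Q -> is_source i -> is_Dmod M ->
  hinj f0 -> hsurj p0 -> (forall x, (kermx (p0 x) == f0 x)%MS) ->
  splits_Delta N d js -> splits_Delta M d.+1 js.
Proof.
move=> ac si DM jf0 sp0 k0 [fN [jfN [XN [pN [spN kN dXN]]]]].
have f0p0 x : f0 x *m p0 x = 0 by apply: ker_eq_mul0.
have fNpN x : fN x *m pN x = 0 by apply: ker_eq_mul0.
case: (Delta_section ac DM si sp0) => s sp.
case: (split_retraction jf0 k0 sp) => r hr.
exists (hjoin s (hcomp fN f0)); split.
  move=> x; apply: inj_row_free => v; rewrite -(hsubmxK v) /= mul_row_col => e.
  have e1 : lsubmx v = 0.
    have := congr1 (mulmx^~ (p0 x)) e.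
    by rewrite /= mulmxDl -!mulmxA sp f0p0 mulmx1 !mulmx0 addr0 mul0mx.
  move: e; rewrite e1 mul0mx add0r => /eqP; rewrite mulmx_free_eq0 ?free_mul //.
  by move/eqP ->; rewrite row_mx0.
exists XN, (hcomp r pN); split => // x.
  by apply: full_mul (spN x); apply: (@rinv_full _ _ _ _ (f0 x)); case: (hr x).
case: (hr x) => f0r sr decomp; apply/andP; split.
  set Kk := kermx _.
  have /submxP [W eW] : (Kk *m r x <= fN x)%MS.
    apply: submx_trans (proj1 (andP (kN x))).
    by apply/sub_kermxP; rewrite -mulmxA; apply/sub_kermxP.
  clearbody Kk; have eK : Kk = Kk *m p0 x *m s x + W *m (fN x *m f0 x).
    by rewrite mulmxA -eW -!mulmxA -mulmxDr decomp mulmx1.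
  by rewrite eK /= -mul_row_col submxMl.
apply/sub_kermxP; rewrite /= mul_col_mx mulmxA sr mul0mx.
by rewrite -!mulmxA (mulmxA (f0 x)) f0r mul1mx fNpN col_mx0.
Qed.

(* A top layer Delta(j) of M stays the top layer of the quotient of M by the
   copy of Delta(i)^d found in N (third isomorphism theorem). *)
Lemma splits_Delta_other (N M : rep) d js j (f0 : qhom N M) (p0 : qhom M (Delta K j)) :
  hinj f0 -> hsurj p0 -> (forall x, (kermx (p0 x) == f0 x)%MS) ->
  splits_Delta N d js -> splits_Delta M d (rcons js j).
Proof.
move=> jf0 sp0 k0 [fN [jfN [XN [pN [spN kN dXN]]]]].
exists (hcomp fN f0); split; first by move=> x; apply: free_mul.
case: (image_stable (hcomp fN f0)) => S1 S2.
case: (quotient_rep S1 S2) => X [p [sp kp]].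
case: (third_iso jf0 sp0 k0 spN kN sp kp) => h [q [jh sq kq]].
by exists X, p; split => //; apply: dfiltS jh sq kq dXN.
Qed.

Lemma filtration_splits (M : rep) js : acyclic Q -> is_source i ->
  dfilt M js -> is_Dmod M ->
  splits_Delta M (count_mem i js) (filter (predC1 i) js).
Proof.
move=> ac si; elim => {M js} [M HM | M N js j f0 p0 jf0 sp0 k0 _ IH] DM.
  by apply: splits_Delta0; apply: dfilt0.
have {}IH := IH (Dmod_sub jf0 DM).
rewrite filter_rcons -cats1 count_cat /= addn0.
case: (eqVneq j i) => [eji | nji] /=.
  by subst j; rewrite addn1; apply: (splits_Delta_source ac si DM jf0 sp0 k0).
by rewrite addn0; apply: (splits_Delta_other jf0 sp0 k0).
Qed.

(* A module filtered without Delta(i)-layers vanishes at the source i,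
   since Delta(j)_i = 0 for j <> i. *)
Lemma filtered_dim_source (X : rep) js : is_source i ->
  dfilt X js -> i \notin js -> rdim X i = 0%N.
Proof.
move=> si; elim => [M HM _ | M N js' j f p jf sp kp _ IH]; first exact: HM.
rewrite -cats1 mem_cat inE negb_or => /andP [nin nj].
have rN : \rank (f i) = 0%N by move/eqnP: (jf i) => ->; rewrite IH.
have rp : \rank (p i) = 0%N.
  apply/eqP; rewrite -leqn0; apply: leq_trans (rank_leq_col _) _.
  by rewrite /= paths_to_source // eq_sym.
by have := mxrank_ker (p i); rewrite (eqmx_rank (kp i)) rN rp subn0.
Qed.

(* Uniqueness: if Delta(i)^d embeds in M via f with a quotient vanishing at
   i, every embedding g of Delta(i)^d has the same image: g p vanishes at i,
   hence everywhere (rpow_det), so im g <= im f, and the ranks agree. *)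
Lemma Delta_power_unique (M X : rep) d (f g : qhom (rpow D d) M) (p : qhom M X) :
  acyclic Q -> rdim X i = 0%N -> (forall x, (kermx (p x) == f x)%MS) ->
  hinj f -> hinj g -> forall x, (g x == f x)%MS.
Proof.
move=> ac rX kp jf jg x.
have gp0 : hcomp g p i = 0 by apply/matrixP => a [b hb]; exfalso; rewrite rX in hb.
have sgf : (g x <= f x)%MS.
  apply: submx_trans (proj1 (andP (kp x))).
  by apply/sub_kermxP; have := rpow_det ac gp0 x.
apply/andP; split => //.
case: (mxrank_leqif_sup sgf) => _ <-.
by move/eqnP: (jg x) => ->; move/eqnP: (jf x) => ->.
Qed.
End Main.

Theorem mainTheorem10 (K : closedFieldType) (Q : quiver) (i : Q0 Q)
    (M : rep Q K) (js : seq (Q0 Q)) :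
  acyclic Q -> is_source i -> is_Dmod M ->
  dfilt M js -> (0 < count_mem i js)%N ->
  let d := count_mem i js in
  exists f : qhom (rpow (Delta K i) d) M,
    hinj f /\
    (forall g : qhom (rpow (Delta K i) d) M, hinj g -> forall x, (g x == f x)%MS) /\
    (exists (X : rep Q K) (p : qhom M X),
        hsurj p /\ (forall x, (kermx (p x) == f x)%MS) /\ Delta_filtered X).
Proof.
move=> ac si DM HM _ d.
case: (filtration_splits ac si HM DM) => f [jf [X [p [sp kp dX]]]].
have rX : rdim X i = 0%N.
  by apply: (filtered_dim_source si dX); rewrite mem_filter /= eqxx.
exists f; split => //; split.
  by move=> g jg; apply: (Delta_power_unique ac rX kp jf jg).
by exists X, p; split => //; split => //; exists (filter (predC1 i) js).
Qed.
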